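(* Let $\mathbb{A}$ be a medial algebra over a field of characteristic not $2,3$ and let $c$ be a nonzero idempotent of $\mathbb{A}$. Then the Peirce subspace $\mathbb{A}_c(0)=\ker L_c$ is an ideal of $\mathbb{A}$ and the quotient $\mathbb{A}'=\mathbb{A}/\mathbb{A}_c(0)$ is a medial algebra. If additionally $c$ is semi-simple, then $\mathbb{A}'_{c'}(0)=0$, where $c'$ is the class of $c$ in $\mathbb{A}'$.
   Context: All algebras commutative, possibly nonassociative, finite-dimensional. Medial: $(xy)(zw)=(xz)(yw)$ identically. $L_c:x\mapsto cx$, $\mathbb{A}_c(\lambda)=\ker(L_c-\lambda\mathbf{1})$. An idempotent $c$ is semi-simple if $\mathbb{A}$ is the direct sum of the eigenspaces $\mathbb{A}_c(\lambda)$ over the distinct eigenvalues $\lambda$ of $L_c$. *)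

From HB Require Import structures.
From mathcomp Require Import all_boot all_order all_algebra.
Set Implicit Arguments. Unset Strict Implicit. Unset Printing Implicit Defensive.
Import GRing.Theory.
Local Open Scope ring_scope.

(* A commutative (possibly nonassociative) finite-dimensional algebra over K
   is a finite-dimensional K-vector space V (vectType) with a multiplication
   mul : V -> V -> V that is commutative and linear in each argument
   (linearity in the second argument + commutativity gives bilinearity). *)
Definition comm_alg_law (K : fieldType) (V : vectType K) (mul : V -> V -> V) :=
  (forall x y, mul x y = mul y x) /\ (forall x, linear (mul x)).

Definition medial (K : fieldType) (V : vectType K) (mul : V -> V -> V) :=
  forall x y z w, mul (mul x y) (mul z w) = mul (mul x z) (mul y w).

Definition Lmul (K : fieldType) (V : vectType K) (mul : V -> V -> V) (c : V)
  : 'End(V) := linfun (mul c).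

Definition peirce (K : fieldType) (V : vectType K) (mul : V -> V -> V) (c : V)
  (l : K) : {vspace V} := lker (Lmul mul c - l *: \1%VF).

Definition idem_elt (K : fieldType) (V : vectType K) (mul : V -> V -> V) (c : V) :=
  mul c c = c.

Definition is_ideal (K : fieldType) (V : vectType K) (mul : V -> V -> V)
  (I : {vspace V}) :=
  forall x y, x \in I -> (mul x y \in I) /\ (mul y x \in I).

(* c is semi-simple: V is the direct sum of the eigenspaces A_c(l) over the
   distinct eigenvalues l of L_c, i.e. the l with
   A_c(l) <> 0 (listed without repetition by s). *)
Definition semi_simple (K : fieldType) (V : vectType K) (mul : V -> V -> V) (c : V) :=
  exists s : seq K,
    [/\ uniq s,
        (forall l, (peirce mul c l != 0%VS) = (l \in s)),
        directv (\sum_(i < size s) peirce mul c s`_i)%VS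
      & (\sum_(i < size s) peirce mul c s`_i)%VS = fullv].

(* pi : V -> B is a quotient map of algebras with kernel I: a surjective
   linear map, multiplicative, whose kernel is exactly I. Any such (B, mulB)
   is (isomorphic to) the quotient algebra V / I. *)
Definition quotient_map (K : fieldType) (V B : vectType K)
  (mul : V -> V -> V) (mulB : B -> B -> B) (I : {vspace V}) (pi : 'Hom(V, B)) :=
  [/\ limg pi = fullv, lker pi = I & forall x y, pi (mul x y) = mulB (pi x) (pi y)].

From HB Require Import structures.
From mathcomp Require Import all_boot all_order all_algebra.
Set Implicit Arguments.
Unset Strict Implicit.
Unset Printing Implicit Defensive.
Import GRing.Theory.
Local Open Scope ring_scope.

(* Since c = cc, mediality gives c(xy) = (cc)(xy) = (cx)(cy), so cx = 0 forces
   c(xy) = 0 and ker L_c is an ideal; mediality passes to any homomorphic image.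
   In the quotient, the class of x is killed by the class of c iff c(cx) = 0.
   When L_c is diagonalizable, ker L_c^2 = ker L_c, so then cx = 0, i.e. the
   class of x is zero. *)

Section Diagonalizable.
Variables (K : fieldType) (V : vectType K).

Lemma eigen_decomp_sqr_eq0 (f : 'End(V)) (s : seq K) (x : V) :
  directv (\sum_(i < size s) lker (f - s`_i *: \1%VF))%VS ->
  (\sum_(i < size s) lker (f - s`_i *: \1%VF))%VS = fullv ->
  f (f x) = 0 -> f x = 0.
Proof.
move=> dir full.
have /memv_sumP[xs xs_eigen ->] : x \in (\sum_(i < size s) lker (f - s`_i *: \1%VF))%VS.
  by rewrite full memvf.
have fxs i : f (xs i) = s`_i *: xs i.
  apply/eqP; rewrite -subr_eq0.
  by have := xs_eigen i isT; rewrite memv_ker add_lfunE opp_lfunE scale_lfunE id_lfunE.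
have fx : f (\sum_(i < size s) xs i) = \sum_(i < size s) s`_i *: xs i.
  by rewrite linear_sum; apply: eq_bigr => i _; rewrite /= fxs.
have f2x : f (\sum_(i < size s) s`_i *: xs i)
           = \sum_(i < size s) (s`_i * s`_i) *: xs i.
  by rewrite linear_sum; apply: eq_bigr => i _; rewrite linearZ /= fxs scalerA.
rewrite fx f2x => f2x0.
have sq0 (i : 'I_(size s)) : (s`_i * s`_i) *: xs i = 0.
  apply: (directv_sum_independent dir) f2x0 i isT => j _.
  by rewrite memvZ ?xs_eigen.
apply: big1 => i _; move/eqP: (sq0 i).
by rewrite scaler_eq0 mulf_eq0 orbb => /orP[/eqP-> | /eqP->]; rewrite ?scale0r ?scaler0.
Qed.

End Diagonalizable.

Section PeirceZero.
Variables (K : fieldType) (V : vectType K) (mul : V -> V -> V).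
Hypothesis linear_mul : forall x, linear (mul x).

Definition mul_linear x : {linear V -> V} :=
  HB.pack (mul x) (GRing.isLinear.Build K V V *:%R (mul x) (linear_mul x)).

Lemma LmulE c v : Lmul mul c v = mul c v.
Proof. by rewrite /Lmul (lfunE (mul_linear c)). Qed.

Lemma mulx0 x : mul x 0 = 0.
Proof. exact: (linear0 (mul_linear x)). Qed.

Lemma memv_peirce0 c v : (v \in peirce mul c 0) = (mul c v == 0).
Proof.
by rewrite memv_ker add_lfunE opp_lfunE scale_lfunE scale0r subr0 LmulE.
Qed.

Lemma peirce0_ideal c :
  (forall x y, mul x y = mul y x) -> medial mul -> idem_elt mul c ->
  is_ideal mul (peirce mul c 0).
Proof.
move=> mulC mulM c_idem x y; rewrite !memv_peirce0 => /eqP cx0.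
have cxy0 : mul c (mul x y) = 0.
  by rewrite -{1}c_idem mulM cx0 mulC mulx0.
by rewrite cxy0 (mulC y x) cxy0.
Qed.

Lemma semi_simple_Lmul_sqr_eq0 c x :
  semi_simple mul c -> mul c (mul c x) = 0 -> mul c x = 0.
Proof.
move=> [s [_ _ dir full]].
by have := eigen_decomp_sqr_eq0 (x := x) dir full; rewrite !LmulE.
Qed.

End PeirceZero.

Section QuotientMap.
Variables (K : fieldType) (V B : vectType K).
Variables (mul : V -> V -> V) (mulB : B -> B -> B) (pi : 'Hom(V, B)).
Hypothesis pi_onto : limg pi = fullv.
Hypothesis pi_mul : forall x y, pi (mul x y) = mulB (pi x) (pi y).

Lemma pi_surj b : exists x, b = pi x.
Proof.
have /memv_imgP[x _ ->] : b \in limg pi by rewrite pi_onto memvf.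
by exists x.
Qed.

Lemma medial_quotient : medial mul -> medial mulB.
Proof.
move=> mulM a b d e.
have [[x ->] [y ->]] := (pi_surj a, pi_surj b).
have [[z ->] [w ->]] := (pi_surj d, pi_surj e).
by rewrite -!pi_mul mulM.
Qed.

Lemma quotient_peirce0_eq0 c :
  (forall x, linear (mul x)) -> (forall b, linear (mulB b)) ->
  lker pi = peirce mul c 0 ->
  (forall x, mul c (mul c x) = 0 -> mul c x = 0) ->
  peirce mulB (pi c) 0 = 0%VS.
Proof.
move=> mul_lin mulB_lin ker_pi ker_sqr.
apply/eqP; rewrite -subv0; apply/subvP => b; have [x ->] := pi_surj b.
have in_ker v : (pi v == 0) = (mul c v == 0).
  by rewrite -memv_ker ker_pi memv_peirce0.
by rewrite memv_peirce0 // -pi_mul in_ker memv0 in_ker => /eqP/ker_sqr->.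
Qed.

End QuotientMap.

Theorem proposition4p1 (K : fieldType) (V : vectType K) (mul : V -> V -> V)
  (c : V) :
  2%N \notin [pchar K] -> 3%N \notin [pchar K] ->
  comm_alg_law mul -> medial mul ->
  c != 0 -> idem_elt mul c ->
  is_ideal mul (peirce mul c 0) /\
  (forall (B : vectType K) (mulB : B -> B -> B) (pi : 'Hom(V, B)),
     comm_alg_law mulB ->
     quotient_map mul mulB (peirce mul c 0) pi ->
     medial mulB /\
     (semi_simple mul c -> peirce mulB (pi c) 0 = 0%VS)).
Proof.
move=> _ _ [mulC mul_lin] mulM _ c_idem.
split; first exact: peirce0_ideal.
move=> B mulB pi [_ mulB_lin] [pi_onto ker_pi pi_mul]; split.
  exact: medial_quotient pi_onto pi_mul mulM.
move=> c_ss; apply: quotient_peirce0_eq0 => // x.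
exact: semi_simple_Lmul_sqr_eq0.
Qed.
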